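(* For each elementary cellular automaton $F$ with rule number in $\{23, 50, 77, 178, 232\}$, $D(\textsc{Pred}_{F,n})=O(\log n)$.
   Context: An elementary cellular automaton (ECA) with rule number $N\in\{0,\dots,255\}$ is the map $F:\{0,1\}^{\mathbb Z}\to\{0,1\}^{\mathbb Z}$ given by $F(x)_i=f(x_{i-1},x_i,x_{i+1})$. Here the local rule $f:\{0,1\}^3\to\{0,1\}$ is determined by $N=\sum_{a,b,c\in\{0,1\}}2^{4a+2b+c}f(a,b,c)$. On a finite word of length $m\ge 3$, $F$ produces the word of length $m-2$ obtained by applying $f$ at every position whose full neighbourhood lies in the word. For $n\ge1$, $\textsc{Pred}_{F,n}:\{0,1\}^{2n+1}\to\{0,1\}$ maps a word $x=x_{-n}\cdots x_n$ to the single letter of $F^n(x)$, i.e. the state of the central cell after $n$ steps. For a function $g:X\times Y\to Z$, $D(g)$ is the minimal depth of a deterministic two-party protocol computing $g$. In such a protocol, Alice knows $x$ and Bob knows $y$. The protocol is a binary tree: each internal node is labelled by a function of Alice's input only or of Bob's input only, with values in $\{\text{left},\text{right}\}$, and each leaf is labelled by an output value. For $g:\{0,1\}^m\to Z$, set $D(g)=\max_{0\le i<m}D(g_i)$, where $g_i:\{0,1\}^i\times\{0,1\}^{m-i}\to Z$ is $g_i(x,y)=g(xy)$. *)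

From mathcomp Require Import all_boot.
Set Implicit Arguments. Unset Strict Implicit. Unset Printing Implicit Defensive.

Definition eca_rule (N : nat) (a b c : bool) : bool :=
  odd (N %/ 2 ^ (4 * a + 2 * b + c)).

Definition eca_step (N : nat) (w : seq bool) : seq bool :=
  [seq eca_rule N (nth false w i) (nth false w i.+1) (nth false w i.+2)
  | i <- iota 0 (size w - 2)].

(* Pred_{F,n} : {0,1}^{2n+1} -> {0,1}, the central cell after n steps. *)
Definition Pred (N n : nat) (x : seq bool) : bool :=
  head false (iter n (eca_step N) x).

Inductive protocol (X Y Z : Type) : Type :=
| PLeaf of Z
| PAlice of (X -> bool) & protocol X Y Z & protocol X Y Z
| PBob of (Y -> bool) & protocol X Y Z & protocol X Y Z.

Fixpoint prun X Y Z (p : protocol X Y Z) (x : X) (y : Y) : Z :=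
  match p with
  | PLeaf z => z
  | PAlice f l r => if f x then prun l x y else prun r x y
  | PBob f l r => if f y then prun l x y else prun r x y
  end.

Fixpoint pdepth X Y Z (p : protocol X Y Z) : nat :=
  match p with
  | PLeaf _ => 0
  | PAlice _ l r => (maxn (pdepth l) (pdepth r)).+1
  | PBob _ l r => (maxn (pdepth l) (pdepth r)).+1
  end.

(* D(g) <= k  for g : X * Y -> Z  (D is the minimal depth, so this is
   exactly the existence of a protocol of depth <= k computing g). *)
Definition D_le X Y Z (g : X -> Y -> Z) (k : nat) : Prop :=
  exists p : protocol X Y Z, pdepth p <= k /\ forall x y, prun p x y = g x y.

(* D(g) <= k for g : {0,1}^m -> Z, with D(g) = max_{0<=i<m} D(g_i),
   g_i(x,y) = g(xy), x in {0,1}^i, y in {0,1}^{m-i}. *)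
Definition Dword_le Z (m : nat) (g : seq bool -> Z) (k : nat) : Prop :=
  forall i, i < m ->
    D_le (fun (x : i.-tuple bool) (y : (m - i).-tuple bool) => g (val x ++ val y)) k.

From mathcomp Require Import all_boot zify.
Set Implicit Arguments. Unset Strict Implicit. Unset Printing Implicit Defensive.

(* Each of the five rules has a parity [b] such that a "wall", two adjacent
   cells whose xor is [b], is mapped to a wall at the same place and shields
   each side from the other: the image of its left cell ignores the cell to
   its left, and the image of its right cell ignores the cell to its right.
   Cut the word of length 2n+1 between Alice's prefix x and Bob's suffix.  If
   x has a wall starting at a position j >= n, the cells up to j evolve
   without looking right, so Alice alone knows the answer.  Otherwise let j < n
   be the last wall of x (or 0): the part of x from j on is determined by the
   bit x_j and the absence of walls, and the left of j is shielded off.  So x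
   matters only through O(n) possible values, which Alice sends in
   O(log n) bits. *)

Section SummaryProtocol.
Variables (X : finType) (Y : Type) (g : X -> Y -> bool) (s : X -> nat).
Hypothesis g_summary : forall x x', s x = s x' -> forall y, g x y = g x' y.

(* Alice reveals [s x] by bisection on [acc <= s x < acc + 2 ^ k]; Bob then
   evaluates [g] on any input of Alice with that summary. *)
Fixpoint summary_protocol k acc : protocol X Y bool :=
  match k with
  | 0 => PBob (fun y => [exists x, (s x == acc) && g x y])
              (PLeaf X Y true) (PLeaf X Y false)
  | k'.+1 => PAlice (fun x => acc + 2 ^ k' <= s x)
      (summary_protocol k' (acc + 2 ^ k')) (summary_protocol k' acc)
  end.

Lemma summary_protocol_depth k acc : pdepth (summary_protocol k acc) = k.+1.
Proof. by elim: k acc => [|k IHk] acc //=; rewrite !IHk maxnn. Qed.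

Lemma summary_protocol_run k acc x y : acc <= s x < acc + 2 ^ k ->
  prun (summary_protocol k acc) x y = g x y.
Proof.
elim: k acc => [|k IHk] acc /= bounds; last first.
  by rewrite expnS in bounds; case: ifP => upper; apply: IHk; lia.
have sx : s x = acc by lia.
suff -> : [exists x', (s x' == acc) && g x' y] = g x y by case: (g x y).
apply/existsP/idP => [[x' /andP[/eqP sx' gx'y]] | gxy].
  by rewrite (g_summary (x' := x')) // sx.
by exists x; rewrite sx eqxx.
Qed.

Lemma D_le_summary k : (forall x, s x < 2 ^ k) -> D_le g k.+1.
Proof.
move=> s_lt; exists (summary_protocol k 0).
rewrite summary_protocol_depth; split=> // x y.
by apply: summary_protocol_run; rewrite add0n s_lt.
Qed.

End SummaryProtocol.

Lemma D_le_weaken X Y Z (g : X -> Y -> Z) k k' :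
  k <= k' -> D_le g k -> D_le g k'.
Proof.
by move=> le_kk' [p [dp pg]]; exists p; split=> //; exact: leq_trans dp le_kk'.
Qed.

Lemma size_eca_step N w : size (eca_step N w) = size w - 2.
Proof. by rewrite size_map size_iota. Qed.

Lemma nth_eca_step N w k : k < size w - 2 ->
  nth false (eca_step N w) k =
  eca_rule N (nth false w k) (nth false w k.+1) (nth false w k.+2).
Proof. by move=> lt_k; rewrite (nth_map 0) ?size_iota // nth_iota. Qed.

Lemma Pred_nth N n w : Pred N n w = nth false (iter n (eca_step N) w) 0.
Proof. by rewrite /Pred; case: (iter _ _ _). Qed.

Definition wall b (w : seq bool) j :=
  addb (nth false w j) (nth false w j.+1) == b.

Definition blocking_rule N b := forall u u' a c v v', addb a c = b ->
  [/\ eca_rule N u a c = eca_rule N u' a c, eca_rule N a c v = eca_rule N a c v'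
    & addb (eca_rule N u a c) (eca_rule N a c v) = b].

Lemma blocking_rule_listed N :
  N \in [:: 23; 50; 77; 178; 232] -> exists b, blocking_rule N b.
Proof.
rewrite !inE => /orP[|/orP[|/orP[|/orP[]]]] /eqP->;
  [exists false | exists true | exists true | exists true | exists false];
  by case=> [] [] [] [] [] [].
Qed.

Definition agree_from (w w' : seq bool) j :=
  forall k, j <= k -> nth false w k = nth false w' k.

Definition agree_upto (w w' : seq bool) j :=
  forall k, k <= j -> nth false w k = nth false w' k.

Lemma agree_from_walls b x x' j : size x = size x' ->
  nth false x j = nth false x' j ->
  (forall l, j <= l -> l.+1 < size x -> wall b x l = wall b x' l) ->
  agree_from x x' j.
Proof.
move=> eq_size eq_j eq_walls k le_jk; rewrite -(subnKC le_jk).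
elim: (k - j) => [|d IHd]; first by rewrite addn0.
have [lt_d|] := ltnP (j + d).+1 (size x); last first.
  by move=> ge_d; rewrite !nth_default -?eq_size // addnS.
move: (eq_walls _ (leq_addr d j) lt_d) => {eq_walls}; rewrite /wall IHd addnS.
by case: (nth _ x' _) (nth _ x _) (nth _ x' _) b => [] [] [] [].
Qed.

Section Walls.
Variables (N : nat) (b : bool).
Hypothesis blockN : blocking_rule N b.
Local Notation F := (eca_step N).

Lemma wall_eca_step w j : j.+3 < size w -> wall b w j.+1 -> wall b (F w) j.
Proof.
move=> lt_j /eqP wall_j; rewrite /wall !nth_eca_step; try lia.
by have [_ _ ->] := blockN (nth false w j) (nth false w j) (nth false w j.+3)
  (nth false w j.+3) wall_j.
Qed.

(* A step drops one cell at each end, so a wall at [j] sits at [j - 1] after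
   it. *)
Definition shielded_suffix w w' j := [/\ size w = size w', agree_from w w' j
  & 0 < j -> j.+1 < size w -> wall b w j].

Definition shielded_prefix w w' j := [/\ size w = size w', agree_upto w w' j.+1
  & j.+1 < size w -> wall b w j].

Lemma shielded_suffix_step w w' j :
  shielded_suffix w w' j -> shielded_suffix (F w) (F w') j.-1.
Proof.
case=> eq_size agree wall_j; split; first by rewrite !size_eca_step eq_size.
  move=> k le_k; have [lt_k|ge_k] := ltnP k (size w - 2); last first.
    by rewrite !nth_default // size_eca_step -?eq_size.
  rewrite !nth_eca_step -?eq_size //.
  have [le_jk|lt_kj] := leqP j k; first by rewrite !agree //; lia.
  have ej : j = k.+1 by lia.
  subst j; have /eqP wall_k1 : wall b w k.+1 by apply: wall_j; lia.
  have [-> _ _] := blockN (nth false w k) (nth false w' k) false false wall_k1.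
  by rewrite !agree //; lia.
move=> pos_j lt_j; rewrite size_eca_step in lt_j.
apply: wall_eca_step; first lia.
by rewrite prednK; [apply: wall_j|]; lia.
Qed.

Lemma shielded_prefix_step w w' j :
  shielded_prefix w w' j.+1 -> shielded_prefix (F w) (F w') j.
Proof.
case=> eq_size agree wall_j; split; first by rewrite !size_eca_step eq_size.
  move=> k le_k; have [lt_k|ge_k] := ltnP k (size w - 2); last first.
    by rewrite !nth_default // size_eca_step -?eq_size.
  rewrite !nth_eca_step -?eq_size //.
  have [le_kj|] := leqP k j; first by rewrite !agree //; lia.
  move=> lt_jk; have ek : k = j.+1 by lia.
  have /eqP wall_k : wall b w k by rewrite ek; apply: wall_j; lia.
  have [_ -> _] :=
    blockN false false (nth false w k.+2) (nth false w' k.+2) wall_k.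
  by rewrite !agree //; lia.
move=> lt_j; rewrite size_eca_step in lt_j.
by apply: wall_eca_step; [lia | apply: wall_j; lia].
Qed.

Lemma shielded_suffix_iter t w w' j : shielded_suffix w w' j ->
  shielded_suffix (iter t F w) (iter t F w') (j - t).
Proof.
elim: t => [|t IHt] shielded; first by rewrite subn0.
by rewrite !iterS subnS; apply/shielded_suffix_step/IHt.
Qed.

Lemma shielded_prefix_iter t w w' j : shielded_prefix w w' (j + t) ->
  shielded_prefix (iter t F w) (iter t F w') j.
Proof.
elim: t w w' => [|t IHt] w w' shielded; first by rewrite addn0 in shielded.
by rewrite !iterSr; apply/IHt/shielded_prefix_step; rewrite -addnS.
Qed.

Lemma Pred_cat_far_wall n x y y' j : size y = size y' ->
  n <= j -> j.+1 < size x -> wall b x j ->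
  Pred N n (x ++ y) = Pred N n (x ++ y').
Proof.
move=> eq_size le_nj lt_j wall_j; rewrite !Pred_nth.
have nth_cat_x k z : k < size x -> nth false (x ++ z) k = nth false x k.
  by move=> lt_k; rewrite nth_cat lt_k.
have : shielded_prefix (x ++ y) (x ++ y') (j - n + n).
  rewrite subnK //; split; first by rewrite !size_cat eq_size.
    by move=> k le_k; rewrite !nth_cat_x //; lia.
  by move=> _; rewrite /wall !nth_cat_x //; lia.
by case/shielded_prefix_iter=> _ /(_ 0 isT).
Qed.

Lemma Pred_cat_shielded n x x' y j : size x = size x' -> agree_from x x' j ->
  (0 < j -> j.+1 < size x /\ wall b x j) -> j <= n ->
  Pred N n (x ++ y) = Pred N n (x' ++ y).
Proof.
move=> eq_size agree wall_j le_jn; rewrite !Pred_nth.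
have : shielded_suffix (x ++ y) (x' ++ y) j.
  split; first by rewrite !size_cat eq_size.
    move=> k le_k; rewrite !nth_cat -eq_size.
    by case: ifP => // _; apply: agree.
  move=> pos_j _; have [lt_j wall_x] := wall_j pos_j.
  by rewrite /wall !nth_cat lt_j ltnW.
by case/(shielded_suffix_iter n)=> _ /(_ 0) -> //; lia.
Qed.

End Walls.

Definition last_wall b (x : seq bool) :=
  \max_(l <- iota 0 (size x).-1 | wall b x l) l.

Lemma leq_last_wall b x l : l < (size x).-1 -> wall b x l -> l <= last_wall b x.
Proof. by move=> lt_l; apply: leq_bigmax_seq; rewrite mem_iota. Qed.

Lemma last_wallP b x :
  last_wall b x = 0 \/ last_wall b x < (size x).-1 /\ wall b x (last_wall b x).
Proof.
rewrite /last_wall big_seq_cond.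
elim/big_ind: _ => [|m1 m2 P1 P2|l]; first by left.
  by case: (leqP m1 m2).
by rewrite mem_iota => /andP[/andP[_ lt_l] wall_l]; right.
Qed.

Section Summary.
Variables (N : nat) (b : bool) (n : nat).

(* Values [0] and [1] mean that [x] alone determines the answer; otherwise
   the code [2 + 4 j + 2 x_j + [wall at j]] records the last wall [j < n]. *)
Definition summary (x : seq bool) : nat :=
  let j := last_wall b x in
  if n <= j then nat_of_bool (Pred N n (x ++ nseq (2 * n + 1 - size x) false))
  else 2 + 4 * j + 2 * nth false x j + wall b x j.

Lemma summary_lt x : summary x < 4 * n + 2.
Proof.
rewrite /summary; case: ifP => [_|/negbT]; first by case: Pred; lia.
by case: (nth _ _ _) (wall _ _ _); lia.
Qed.

Hypotheses (blockN : blocking_rule N b) (n_gt0 : 0 < n).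

Lemma far_last_wall x : n <= last_wall b x ->
  last_wall b x < (size x).-1 /\ wall b x (last_wall b x).
Proof. by case: (last_wallP b x) => // ->; lia. Qed.

Lemma summary_sound x x' y : size x = size x' -> size x + size y = 2 * n + 1 ->
  summary x = summary x' -> Pred N n (x ++ y) = Pred N n (x' ++ y).
Proof.
move=> eq_size size_xy; rewrite /summary -eq_size.
set j := last_wall b x; set j' := last_wall b x'.
have size_pad : size (nseq (2 * n + 1 - size x) false) = size y.
  by rewrite size_nseq; lia.
case: ifP => far_j; case: ifP => far_j'; try by case: Pred; lia.
  have [lt_j wall_j] := far_last_wall far_j.
  have [lt_j' wall_j'] := far_last_wall far_j'.
  rewrite ltn_predRL in lt_j; rewrite ltn_predRL in lt_j'.
  rewrite (Pred_cat_far_wall blockN (esym size_pad) far_j lt_j wall_j).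
  rewrite (Pred_cat_far_wall blockN (esym size_pad) far_j' lt_j' wall_j').
  by case: (Pred N n (x ++ _)) (Pred N n (x' ++ _)) => [] [].
move=> eq_summary; have [eq_jj' eq_bit eq_wall] : [/\ j = j',
    nth false x j = nth false x' j' & wall b x j = wall b x' j'].
  by move: eq_summary; case: (nth _ _ _) (nth _ _ _) (wall _ _ _) (wall _ _ _)
    => [] [] [] [] e; split; lia.
have lt_jn : j < n by rewrite ltnNge far_j.
apply: (Pred_cat_shielded blockN y eq_size _ _ (ltnW lt_jn)); last first.
  case: (last_wallP b x) => [|[lt_j wall_j]] pos_j; first lia.
  by rewrite -ltn_predRL.
rewrite -eq_jj' in eq_bit eq_wall.
apply: (agree_from_walls eq_size eq_bit) => l le_jl lt_l.
have [<- | ne_jl] := eqVneq j l; first exact: eq_wall.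
have lt_jl : j < l by rewrite ltn_neqAle ne_jl.
have no_wall z : last_wall b z = j -> l < (size z).-1 -> wall b z l = false.
  move=> ej lt_lz; apply/negP => /(leq_last_wall lt_lz).
  by rewrite ej leqNgt lt_jl.
by rewrite !no_wall // -?eq_size ltn_predRL.
Qed.

End Summary.

Theorem mainTheorem14 :
  forall N : nat, N \in [:: 23; 50; 77; 178; 232] ->
  exists C : nat, forall n : nat, 1 <= n ->
    Dword_le (2 * n + 1) (Pred N n) (C * (trunc_log 2 n).+1).
Proof.
move=> N /blocking_rule_listed[b blockN]; exists 4 => n n_gt0 i lt_i.
apply: (@D_le_weaken _ _ _ _ (trunc_log 2 n + 3).+1); first lia.
apply: (D_le_summary (s := fun x : i.-tuple bool => summary N b n (val x))).
  move=> x x' eq_x y; apply: (summary_sound blockN n_gt0 _ _ eq_x);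
  by rewrite !size_tuple //; lia.
move=> x /=; apply: leq_trans (summary_lt N b n (val x)) _.
have := trunc_log_ltn n (isT : 1 < 2); rewrite !expnD expnS; lia.
Qed.
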